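(* For any recurrent set $F\subset A^*$ and any integer $d\ge1$, there are only finitely many finite $F$-maximal bifix codes $X\subset F$ of $F$-degree $d$.
   Context: $A$ is a finite alphabet. $F$ is recurrent if it is nonempty, closed under factors, and for all $u,w\in F$ there is $v\in F$ with $uvw\in F$. A bifix code is a set of nonempty words none of which is a proper prefix or proper suffix of another; $X\subset F$ is $F$-maximal bifix if not properly contained in a bifix code contained in $F$. A parse of $w$ with respect to $X$ is a triple $(v,x,u)$ with $w=vxu$, $v$ having no suffix in $X$, $x\in X^*$, $u$ having no prefix in $X$; $\delta_X(w)$ is their number and the $F$-degree is $d_F(X)=\max_{w\in F}\delta_X(w)$. *)

From mathcomp Require Import all_boot.
Set Implicit Arguments. Unset Strict Implicit. Unset Printing Implicit Defensive.

Section Words.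
Variable A : finType.
Implicit Types (F X Y : pred (seq A)) (u v w x : seq A).

Definition recurrent F : Prop :=
  [/\ exists w, F w,
      (forall u v w, F (u ++ v ++ w) -> F v) &
      (forall u w, F u -> F w -> exists2 v, F v & F (u ++ v ++ w))].

Definition bifix_code X : Prop :=
  [/\ ~~ X [::],
      (forall x y, X x -> X y -> prefix x y -> x = y) &
      (forall x y, X x -> X y -> suffix x y -> x = y)].

Definition subset_words X Y : Prop := forall w, X w -> Y w.

Definition F_maximal_bifix F X : Prop :=
  [/\ bifix_code X, subset_words X F &
      forall Y, bifix_code Y -> subset_words Y F -> subset_words X Y ->
        subset_words Y X].

Definition finite_words X : Prop := exists s : seq (seq A), X =i s.

(* membership in X^*, by recursion with fuel (fuel = size x suffices) *)
Fixpoint in_star_fuel X (n : nat) x : bool :=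
  match n with
  | 0 => x == [::]
  | n'.+1 => (x == [::]) ||
      has (fun k => X (take k.+1 x) && in_star_fuel X n' (drop k.+1 x))
          (iota 0 (size x))
  end.

Definition in_star X x : bool := in_star_fuel X (size x) x.

(* v has a suffix in X / u has a prefix in X (suffixes/prefixes include
   the empty word and the word itself) *)
Definition has_suffix_in X v : bool :=
  has (fun k => X (drop k v)) (iota 0 (size v).+1).
Definition has_prefix_in X u : bool :=
  has (fun k => X (take k u)) (iota 0 (size u).+1).

(* A parse (v,x,u) of w, with w = v x u, is determined by i = |v| and
   j = |v x|, 0 <= i <= j <= |w|. *)
Definition is_parse X w (i j : nat) : bool :=
  [&& i <= j, j <= size w,
      ~~ has_suffix_in X (take i w),
      in_star X (drop i (take j w)) &
      ~~ has_prefix_in X (drop j w)].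

Definition delta X w : nat :=
  \sum_(0 <= i < (size w).+1) \sum_(0 <= j < (size w).+1) is_parse X w i j.

Definition has_F_degree F X (d : nat) : Prop :=
  (exists2 w, F w & delta X w = d) /\ (forall w, F w -> delta X w <= d).

End Words.

From mathcomp Require Import all_boot.
From Stdlib Require Import Classical_Prop.
Set Implicit Arguments. Unset Strict Implicit. Unset Printing Implicit Defensive.

(* Fix a finite bifix code X of F-degree d.  Every cut point r of a word W has an
   origin: the start of the unique parse of W whose X^*-part passes through r.  The
   origins of W are among its at most d parse starts, and the factor between two
   consecutive cut points with the same origin is a word of X.

   By induction on k < d, an interval of a word of F whose interior cut points have at
   most k origins has length at most some M_k that does not depend on X.  Indeed, for
   k + 1 origins, colouring the interior cut points by their origin cuts the interval
   u into words of X which, by induction, have length at most M_k.  Using recurrence,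
   put u between two copies of a word z of degree d: fewer than d origins meet the
   interior of u, so one of the d parses of the sandwich jumps over u with a single
   word of X, and |u| is at most the length of the longest word of X.  This bound
   only depends on the (finitely many possible) sets of words of length at most M_k
   that occur, so a uniform bound exists.  Finally the interior cut points of a word
   of X have at most d - 1 origins, so X consists of words of length at most M_(d-1). *)

Lemma ex_least_geq (P : pred nat) m n : m <= n -> P n ->
  exists r, [/\ m <= r <= n, P r & forall s, m <= s < r -> ~~ P s].
Proof.
move=> le_mn Pn; have exP : exists r, (m <= r) && P r by exists n; rewrite le_mn.
case: (ex_minnP exP) => r /andP [le_mr Pr] minr.
exists r; split=> //; first by rewrite le_mr minr ?le_mn.
by move=> s /andP [le_ms lt_sr]; apply: contraL lt_sr => Ps; rewrite -leqNgt minr ?le_ms.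
Qed.

Lemma ex_greatest_leq (P : pred nat) m n : m <= n -> P m ->
  exists r, [/\ m <= r <= n, P r & forall s, r < s <= n -> ~~ P s].
Proof.
move=> le_mn Pm.
have exP : exists r, [&& m <= r, r <= n & P r] by exists m; rewrite leqnn le_mn.
have ubP r : [&& m <= r, r <= n & P r] -> r <= n by case/and3P.
case: (ex_maxnP exP ubP) => r /and3P [le_mr le_rn Pr] maxr.
exists r; split; rewrite ?le_mr //.
move=> s /andP [lt_rs le_sn]; apply/negP => Ps.
have le_ms := leq_trans le_mr (ltnW lt_rs).
by move: lt_rs; rewrite ltnNge maxr // le_ms le_sn Ps.
Qed.

Lemma sum_iota_unique n (f : nat -> bool) (b : bool) :
  (b -> exists2 j, j < n & forall j', f j' = (j' == j)) -> (forall j, f j -> b) ->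
  \sum_(j <- iota 0 n) f j = b.
Proof.
case: b => [/(_ isT) [j lt_jn f_j] _|_ f_b]; last first.
  by rewrite big1 // => j _; case: (f j) (f_b j) => // /(_ isT).
rewrite (eq_bigr (fun j' => nat_of_bool (j' == j))) => [|j' _]; last by rewrite f_j.
by rewrite -big_mkcond sum1_count count_uniq_mem ?iota_uniq // mem_iota lt_jn.
Qed.

Lemma uniq_has_notin (T : eqType) (s O : seq T) : uniq s -> size O < size s ->
  has [predC O] s.
Proof.
move=> uniq_s lt_Os; apply/hasPn => all_in.
by have := uniq_leq_size uniq_s (fun x s_x => negbNE (all_in x s_x)); rewrite leqNgt lt_Os.
Qed.

Lemma catIs (T : eqType) (s s1 s2 : seq T) : s ++ s1 = s ++ s2 -> s1 = s2.
Proof. by move/eqP; rewrite eqseq_cat // eqxx => /eqP. Qed.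

Lemma catsI (T : eqType) (s s1 s2 : seq T) : s1 ++ s = s2 ++ s -> s1 = s2.
Proof.
move=> eq12; have /addIn sz12 : size s1 + size s = size s2 + size s.
  by rewrite -!size_cat eq12.
by move/eqP: eq12; rewrite eqseq_cat // => /andP [/eqP].
Qed.

Lemma cat_prefix_total (T : eqType) (s1 s2 t1 t2 : seq T) :
  s1 ++ t1 = s2 ++ t2 -> prefix s1 s2 \/ prefix s2 s1.
Proof.
elim: s1 s2 => [|x s1 IHs] [|y s2] /=; try by [left | right].
by case=> -> /IHs; rewrite /= eqxx.
Qed.

Lemma cat_suffix_total (T : eqType) (s1 s2 t1 t2 : seq T) :
  t1 ++ s1 = t2 ++ s2 -> suffix s1 s2 \/ suffix s2 s1.
Proof.
by move=> eq12; apply: (@cat_prefix_total _ _ _ (rev t1) (rev t2)); rewrite -!rev_cat eq12.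
Qed.

Definition slice (T : Type) (s : seq T) i j := drop i (take j s).

Section Slices.
Variables (T : Type) (s : seq T).

Lemma size_slice i j : i <= j -> j <= size s -> size (slice s i j) = j - i.
Proof. by move=> le_ij le_js; rewrite size_drop size_takel. Qed.

Lemma sliceE i j : i <= j -> slice s i j = take (j - i) (drop i s).
Proof. by move=> le_ij; rewrite /slice take_drop subnK. Qed.

Lemma drop_slice i j : i <= j -> drop i s = slice s i j ++ drop j s.
Proof.
by move=> le_ij; rewrite sliceE // -{1}(cat_take_drop (j - i) (drop i s)) drop_drop subnK.
Qed.

Lemma take_slice i j : i <= j -> take j s = take i s ++ slice s i j.
Proof. by move=> le_ij; rewrite /slice -{1}(cat_take_drop i (take j s)) take_takel. Qed.

Lemma slice_cat i j k : i <= j -> j <= k -> k <= size s ->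
  slice s i k = slice s i j ++ slice s j k.
Proof.
move=> le_ij le_jk le_ks.
rewrite {1}/slice (take_slice le_jk) drop_cat size_takel ?(leq_trans le_jk le_ks) //.
case: ltnP => // le_ji; have -> : i = j by apply/eqP; rewrite eqn_leq le_ij.
by rewrite subnn drop0 [slice s j j]/slice drop_oversize // size_takel // (leq_trans le_jk le_ks).
Qed.

Lemma slice_drop_cat i x w : drop i s = x ++ w -> slice s i (i + size x) = x.
Proof. by move=> eq_d; rewrite sliceE ?leq_addr // addKn eq_d take_size_cat. Qed.

Lemma size_drop_cat i x w : i <= size s -> drop i s = x ++ w -> i + size x <= size s.
Proof. by move=> le_is eq_d; rewrite -leq_subRL // -size_drop eq_d size_cat leq_addr. Qed.

Lemma slice0s j : slice s 0 j = take j s.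
Proof. exact: drop0. Qed.

End Slices.

Lemma slice_middle (T : Type) (s1 s s2 : seq T) i j : i <= j -> j <= size s ->
  slice (s1 ++ s ++ s2) (size s1 + i) (size s1 + j) = slice s i j.
Proof.
move=> le_ij le_js; rewrite /slice take_cat ltnNge leq_addr /= addKn takel_cat //.
by rewrite drop_cat ltnNge leq_addr /= addKn.
Qed.

Lemma slice_slice (T : Type) (s : seq T) p q i j : p <= q -> q <= size s ->
  i <= j -> j <= q - p -> slice (slice s p q) i j = slice s (p + i) (p + j).
Proof.
move=> le_pq le_qs le_ij le_j.
have Es : take p s ++ slice s p q ++ drop q s = s by rewrite catA -take_slice // cat_take_drop.
have := (@slice_middle _ (take p s) (slice s p q) (drop q s) i j le_ij); rewrite size_slice // Es.
by rewrite size_takel ?(leq_trans le_pq le_qs) // => ->.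
Qed.

(* [g] colours the cut points [0 .. size u] of [u]. *)
Definition cut_colouring (T : Type) (Y : pred (seq T)) k (u : seq T) (g : nat -> nat) :=
  (forall r, 0 < r < size u -> g r < k) /\
  (forall r r', r < r' -> r' <= size u -> g r = g r' -> g r < k ->
     (forall s, r < s < r' -> g s != g r) -> Y (slice u r r')).

Definition colourable (T : Type) (Y : pred (seq T)) k u := exists g, cut_colouring Y k u g.

Lemma colours_image (T : eqType) (rs : seq nat) (g : nat -> nat) (f : nat -> T) k :
  (forall r, r \in rs -> g r < k) ->
  (forall r r', r \in rs -> r' \in rs -> g r = g r' -> f r = f r') ->
  exists2 O : seq T, size O <= k & forall r, r \in rs -> f r \in O.
Proof.
move=> g_lt f_g; pose first_of c := nth 0 rs (find (fun r => g r == c) rs).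
exists [seq f (first_of c) | c <- iota 0 k]; first by rewrite size_map size_iota.
move=> r rs_r; apply/mapP; exists (g r); first by rewrite mem_iota g_lt.
have has_c : has (fun r' => g r' == g r) rs by apply/hasP; exists r.
by apply: f_g; rewrite // ?mem_nth -?has_find //; apply/esym/eqP/(nth_find 0 has_c).
Qed.

Definition colouring_bound (T : eqType) (F : pred (seq T)) d (s : seq (seq T)) b :=
  forall k u, k < d -> F u -> colourable [pred w in s] k u -> size u <= b.

Lemma colouring_bound_le (T : eqType) (F : pred (seq T)) d s b b' :
  b <= b' -> colouring_bound F d s b -> colouring_bound F d s b'.
Proof. by move=> le_bb' bound_b k u lt_kd Fu /(bound_b k u lt_kd Fu) /leq_trans; apply. Qed.

Fixpoint sublists (T : Type) (s : seq T) : seq (seq T) :=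
  if s is x :: s' then sublists s' ++ map (cons x) (sublists s') else [:: [::]].

Lemma mem_sublists_filter (T : eqType) (P : pred T) (s : seq T) :
  filter P s \in sublists s.
Proof.
elim: s => [|x s IHs] /=; first by rewrite inE.
by rewrite mem_cat; case: (P x); rewrite ?map_f ?IHs ?orbT.
Qed.

Definition words_upto (A : finType) (N : nat) : seq (seq A) :=
  flatten [seq [seq val t | t : m.-tuple A] | m <- iota 0 N.+1].

Lemma mem_words_upto (A : finType) N (w : seq A) : size w <= N -> w \in words_upto A N.
Proof.
move=> le_w_N; apply/flattenP; exists [seq val t | t : (size w).-tuple A].
  by apply: (map_f (fun m => [seq val t | t : m.-tuple A])); rewrite mem_iota ltnS.
by apply/mapP; exists (in_tuple w); rewrite ?mem_enum.
Qed.

Lemma ex_uniform_bound (T : eqType) (B : T -> nat -> Prop) (s : seq T) :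
  (forall t b b', b <= b' -> B t b -> B t b') ->
  exists N, forall t, t \in s -> (exists b, B t b) -> B t N.
Proof.
move=> B_mono; elim: s => [|t0 s [N IHs]]; first by exists 0.
have [[b Bb]|noB] := classic (exists b, B t0 b); last first.
  by exists N => t; rewrite inE => /predU1P [-> /noB|/IHs].
exists (maxn b N) => t; rewrite inE => /predU1P [-> _|/IHs Bt /Bt].
  by apply: B_mono Bb; rewrite leq_maxl.
by apply: B_mono; rewrite leq_maxr.
Qed.

Lemma finite_words_bounded (A : finType) (X : pred (seq A)) :
  finite_words X -> exists n, forall x, X x -> size x <= n.
Proof.
case=> s eq_Xs; exists (\max_(x <- s) size x) => x Xx.
by apply: leq_bigmax_seq => //; rewrite -eq_Xs.
Qed.

Lemma recurrent_sandwich (A : finType) (F : pred (seq A)) z u : recurrent F -> F z -> F u ->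
  exists t t', F (z ++ t ++ u ++ t' ++ z).
Proof.
case=> _ _ rec Fz Fu; have [t _ Fztu] := rec _ _ Fz Fu; have [t' _ F'] := rec _ _ Fztu Fz.
by exists t, t'; rewrite -!catA in F'.
Qed.

(** * The star of a bifix code *)

Section Code.
Variables (A : finType) (X : pred (seq A)).
Hypothesis code_nil : ~~ X [::].
Hypothesis code_prefix : forall x y, X x -> X y -> prefix x y -> x = y.
Hypothesis code_suffix : forall x y, X x -> X y -> suffix x y -> x = y.

Inductive star : seq A -> Prop :=
| star_nil : star [::]
| star_cons x w : X x -> star w -> star (x ++ w).

Lemma code_size_gt0 x : X x -> 0 < size x.
Proof. by case: x => // Xnil; move: code_nil; rewrite Xnil. Qed.

Lemma star_cat u v : star u -> star v -> star (u ++ v).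
Proof. by elim=> // x w Xx _ IHw /IHw; rewrite -catA; apply: star_cons. Qed.

Lemma star_code x : X x -> star x.
Proof. by move=> Xx; rewrite -[x]cats0; apply: star_cons Xx star_nil. Qed.

Lemma star_first w : star w -> w <> [::] ->
  exists x w', [/\ w = x ++ w', X x & star w'].
Proof. by case=> [//|x w' Xx star_w' _]; exists x, w'. Qed.

Lemma star_last s : star s -> s <> [::] ->
  exists w x, [/\ s = w ++ x, X x & star w].
Proof.
elim=> [//|x w Xx star_w IHw _].
have [->|/eqP/IHw [w' [x' [-> Xx' star_w']]]] := eqVneq w [::].
  by exists [::], x; rewrite cats0; split=> //; apply: star_nil.
by exists (x ++ w'), x'; rewrite catA; split=> //; apply: star_cons.
Qed.

Lemma code_catIl x x' s s' : X x -> X x' -> x ++ s = x' ++ s' -> x = x' /\ s = s'.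
Proof.
move=> Xx Xx' eq_xs; suff eq_xx' : x = x' by split=> //; move: eq_xs; rewrite eq_xx' => /catIs.
by case: (cat_prefix_total eq_xs) => [|pre_x'x]; [apply: code_prefix | apply/esym/code_prefix].
Qed.

Lemma code_catIr x x' s s' : X x -> X x' -> s ++ x = s' ++ x' -> x = x' /\ s = s'.
Proof.
move=> Xx Xx' eq_sx; suff eq_xx' : x = x' by split=> //; move: eq_sx; rewrite eq_xx' => /catsI.
by case: (cat_suffix_total eq_sx) => [|suf_x'x]; [apply: code_suffix | apply/esym/code_suffix].
Qed.

Lemma star_right_unitary u v : star u -> star (u ++ v) -> star v.
Proof.
elim=> // x w Xx _ IHw; rewrite -catA => /star_first [|x' [w' [eq_xw Xx' star_w']]].
  by apply/eqP; rewrite -size_eq0 size_cat -lt0n ltn_addr ?code_size_gt0.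
by apply: IHw; have [_ ->] := code_catIl Xx Xx' eq_xw.
Qed.

Lemma star_left_unitary u v : star v -> star (u ++ v) -> star u.
Proof.
have [n] := ubnP (size v); elim: n v => // n IHn v lt_vn star_v star_uv.
have [v0|/eqP v_neq0] := eqVneq v [::]; first by rewrite v0 cats0 in star_uv.
have [v' [x [eq_v Xx star_v']]] := star_last star_v v_neq0.
have [|w [x' [eq_uv Xx' star_w]]] := star_last star_uv.
  by apply/eqP; rewrite -size_eq0 -lt0n eq_v !size_cat !addn_gt0 (code_size_gt0 Xx) !orbT.
rewrite eq_v catA in eq_uv; have [_ eq_w] := code_catIr Xx Xx' eq_uv.
apply: (IHn v') => //; last by rewrite eq_w.
rewrite eq_v size_cat ltnS in lt_vn; apply: leq_trans lt_vn.
by rewrite -addn1 leq_add2l (code_size_gt0 Xx).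
Qed.

Lemma in_star_fuelP n w : size w <= n -> in_star_fuel X n w <-> star w.
Proof.
elim: n w => [|n IHn] w /= le_wn.
  by move: le_wn; rewrite leqn0 size_eq0 => /eqP ->; split=> // _; apply: star_nil.
split.
  case/orP => [/eqP -> | /hasP [k]]; first exact: star_nil.
  rewrite mem_iota => /andP [_ lt_kw] /andP [Xk /IHn star_k].
  rewrite -(cat_take_drop k.+1 w); apply: star_cons Xk (star_k _).
  by rewrite size_drop leq_subLR addSn (leq_trans le_wn) // ltnS leq_addl.
have [-> //|/eqP w_neq0 /star_first] := eqVneq w [::].
case=> // x [w' [eq_w Xx star_w']]; apply/orP; right; apply/hasP.
have eq_x : (size x).-1.+1 = size x := prednK (code_size_gt0 Xx).
exists (size x).-1; first by rewrite mem_iota add0n eq_x eq_w size_cat leq_addr.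
rewrite eq_x eq_w take_size_cat // drop_size_cat // Xx /=; apply/IHn => //.
by move: le_wn; rewrite eq_w size_cat -eq_x addSn ltnS; apply: leq_trans; rewrite leq_addl.
Qed.

Lemma in_starP w : in_star X w <-> star w.
Proof. exact: in_star_fuelP. Qed.

Lemma has_suffix_inP v : reflect (exists v1 v2, v = v1 ++ v2 /\ X v2) (has_suffix_in X v).
Proof.
apply: (iffP hasP) => [[k _ Xk]|[v1 [v2 [-> Xv2]]]].
  by exists (take k v), (drop k v); rewrite cat_take_drop.
by exists (size v1); rewrite ?drop_size_cat // mem_iota size_cat ltnS leq_addr.
Qed.

Lemma has_prefix_inP u : reflect (exists u1 u2, u = u1 ++ u2 /\ X u1) (has_prefix_in X u).
Proof.
apply: (iffP hasP) => [[k _ Xk]|[u1 [u2 [-> Xu1]]]].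
  by exists (take k u), (drop k u); rewrite cat_take_drop.
by exists (size u1); rewrite ?take_size_cat // mem_iota size_cat ltnS leq_addr.
Qed.

Lemma star_max_prefix s : exists t u, [/\ s = t ++ u, star t & ~~ has_prefix_in X u].
Proof.
have [n] := ubnP (size s); elim: n s => // n IHn s lt_sn.
have [/has_prefix_inP [x [s' [eq_s Xx]]]|no_pre] := boolP (has_prefix_in X s); last first.
  by exists [::], s; split=> //; apply: star_nil.
have [|t [u [eq_s' star_t no_pre]]] := IHn s'.
  rewrite eq_s size_cat ltnS in lt_sn; apply: leq_trans lt_sn.
  by rewrite -add1n leq_add2r (code_size_gt0 Xx).
by exists (x ++ t), u; rewrite eq_s eq_s' catA; split=> //; apply: star_cons.
Qed.

Lemma star_max_suffix s : exists u t, [/\ s = u ++ t, star t & ~~ has_suffix_in X u].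
Proof.
have [n] := ubnP (size s); elim: n s => // n IHn s lt_sn.
have [/has_suffix_inP [s' [x [eq_s Xx]]]|no_suf] := boolP (has_suffix_in X s); last first.
  by exists s, [::]; rewrite cats0; split=> //; apply: star_nil.
have [|u [t [eq_s' star_t no_suf]]] := IHn s'.
  rewrite eq_s size_cat ltnS in lt_sn; apply: leq_trans lt_sn.
  by rewrite -addn1 leq_add2l (code_size_gt0 Xx).
by exists u, (t ++ x); rewrite eq_s eq_s' catA; split=> //; apply/star_cat/star_code.
Qed.

Lemma star_max_prefix_uniq t u t' u' : t ++ u = t' ++ u' -> star t -> star t' ->
  ~~ has_prefix_in X u -> ~~ has_prefix_in X u' -> t = t'.
Proof.
wlog le_tt' : t u t' u' / size t <= size t' => [hwlog|].
  move=> eq_tu star_t star_t' no_u no_u'; have [le|/ltnW le] := leqP (size t) (size t').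
    exact: (hwlog t u t' u').
  exact/esym/(hwlog t' u' t u).
move=> eq_tu star_t star_t' no_u _.
have [m eq_t'] : exists m, t' = t ++ m.
  case: (cat_prefix_total eq_tu) => /prefixP [m eq_m]; first by exists m.
  have : size t' + size m <= size t' + 0 by rewrite addn0 -size_cat -eq_m.
  by rewrite leq_add2l leqn0 size_eq0 => /eqP m0; exists [::]; rewrite eq_m m0 !cats0.
have star_m : star m by apply: star_right_unitary star_t _; rewrite -eq_t'.
have [m0|/eqP m_neq0] := eqVneq m [::]; first by rewrite eq_t' m0 cats0.
have [x [w [eq_m Xx _]]] := star_first star_m m_neq0.
move: eq_tu; rewrite eq_t' -catA => /catIs eq_u; case/negP: no_u; apply/has_prefix_inP.
by exists x, (w ++ u'); rewrite eq_u eq_m catA.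
Qed.

Lemma star_max_suffix_uniq t u t' u' : u ++ t = u' ++ t' -> star t -> star t' ->
  ~~ has_suffix_in X u -> ~~ has_suffix_in X u' -> t = t'.
Proof.
wlog le_tt' : t u t' u' / size t <= size t' => [hwlog|].
  move=> eq_ut star_t star_t' no_u no_u'; have [le|/ltnW le] := leqP (size t) (size t').
    exact: (hwlog t u t' u').
  exact/esym/(hwlog t' u' t u).
move=> eq_ut star_t star_t' no_u _.
have [m eq_t'] : exists m, t' = m ++ t.
  case: (cat_suffix_total eq_ut) => /suffixP [m eq_m]; first by exists m.
  have : size m + size t' <= 0 + size t' by rewrite add0n -size_cat -eq_m.
  by rewrite leq_add2r leqn0 size_eq0 => /eqP m0; exists [::]; rewrite eq_m m0.
have star_m : star m by apply: star_left_unitary star_t _; rewrite -eq_t'.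
have [m0|/eqP m_neq0] := eqVneq m [::]; first by rewrite eq_t' m0.
have [w [x [eq_m Xx _]]] := star_last star_m m_neq0.
move: eq_ut; rewrite eq_t' catA => /catsI eq_u; case/negP: no_u; apply/has_suffix_inP.
by exists (u' ++ w), x; rewrite eq_u eq_m catA.
Qed.

(** * Parses *)

(* [start_pos W i] ([end_pos W j]) holds iff [i] ([j]) is the length of [v] ([v x]) in
   some parse [(v, x, u)] of [W]; either one determines the parse. *)
Definition start_pos W i := ~~ has_suffix_in X (take i W).
Definition end_pos W j := ~~ has_prefix_in X (drop j W).

Lemma start_pos_parse W i : start_pos W i -> i <= size W ->
  exists2 j, j <= size W & forall j', is_parse X W i j' = (j' == j).
Proof.
move=> start_i le_iW; have [t [u [eq_tu star_t no_u]]] := star_max_prefix (drop i W).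
have le_j : i + size t <= size W.
  by rewrite -leq_subRL // -size_drop eq_tu size_cat leq_addr.
exists (i + size t) => // j; apply/idP/eqP => [|->].
  case/and5P => le_ij le_jW _ /in_starP star_ij no_j.
  have := star_max_prefix_uniq (etrans (esym eq_tu) (drop_slice W le_ij)) star_t star_ij no_u no_j.
  by move=> ->; rewrite size_slice // subnKC.
have eq_t : slice W i (i + size t) = t by rewrite sliceE ?leq_addr // addKn eq_tu take_size_cat.
rewrite /is_parse leq_addr le_j -/(start_pos W i) start_i -/(slice W i _) eq_t /=.
apply/andP; split; first exact/in_starP.
by rewrite addnC -drop_drop eq_tu drop_size_cat.
Qed.

Lemma end_pos_parse W j : end_pos W j -> j <= size W ->
  exists2 i, i <= size W & forall i', is_parse X W i' j = (i' == i).
Proof.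
move=> end_j le_jW; have [u [t [eq_ut star_t no_u]]] := star_max_suffix (take j W).
have le_uj : size u <= j by rewrite -(size_takel le_jW) eq_ut size_cat leq_addr.
exists (size u); first exact: leq_trans le_jW.
move=> i; apply/idP/eqP => [|->].
  case/and5P => le_ij _ no_i /in_starP star_ij _.
  have eq_W := etrans (esym eq_ut) (take_slice W le_ij).
  have eq_t := star_max_suffix_uniq eq_W star_t star_ij no_u no_i.
  by move: eq_W; rewrite eq_t => /catsI ->; rewrite size_takel // (leq_trans le_ij).
have eq_u : take (size u) W = u by rewrite -(take_takel _ le_uj) eq_ut take_size_cat.
rewrite /is_parse le_uj le_jW -/(end_pos W j) end_j eq_u no_u andbT /=; apply/in_starP.
by rewrite -/(slice W _ j) /slice eq_ut drop_size_cat.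
Qed.

Lemma delta_start W : delta X W = count (start_pos W) (iota 0 (size W).+1).
Proof.
rewrite /delta -sum1_count [RHS]big_mkcond /index_iota subn0.
apply: eq_big_seq => i; rewrite mem_iota ltnS => /andP [_ le_iW].
apply: sum_iota_unique => [start_i|j /and5P [_ _ start_i _ _] //].
by have [j le_jW parse_j] := start_pos_parse start_i le_iW; exists j.
Qed.

Lemma delta_end W : delta X W = count (end_pos W) (iota 0 (size W).+1).
Proof.
rewrite /delta exchange_big -sum1_count [RHS]big_mkcond /index_iota subn0.
apply: eq_big_seq => j; rewrite mem_iota ltnS => /andP [_ le_jW].
apply: sum_iota_unique => [end_j|i /and5P [_ _ _ _ end_j] //].
by have [i le_iW parse_i] := end_pos_parse end_j le_jW; exists i.
Qed.

Lemma delta_cat_start z v :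
  delta X (z ++ v) = delta X z + count (start_pos (z ++ v)) (iota (size z).+1 (size v)).
Proof.
rewrite !delta_start size_cat -addSn iotaD count_cat; congr (_ + _).
by apply: eq_in_count => i; rewrite mem_iota ltnS => /andP [_ le_iz]; rewrite /start_pos takel_cat.
Qed.

Lemma delta_cat_end v z :
  delta X (v ++ z) = count (end_pos (v ++ z)) (iota 0 (size v)) + delta X z.
Proof.
rewrite !delta_end size_cat -addnS iotaD count_cat add0n; congr (_ + _).
rewrite -[size v]addn0 iotaDl count_map; apply: eq_count => j /=.
by rewrite /end_pos drop_cat ltnNge leq_addr /= addKn.
Qed.

(** * Origins *)

Section Origins.
Variable W : seq A.

Definition is_origin o r := [&& o <= r, start_pos W o & in_star X (slice W o r)].
Definition origin r := find (is_origin^~ r) (iota 0 r.+1).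

Lemma is_origin_exists r : r <= size W -> exists o, is_origin o r.
Proof.
move=> le_rW; have [u [t [eq_ut star_t no_u]]] := star_max_suffix (take r W).
have le_ur : size u <= r by rewrite -(size_takel le_rW) eq_ut size_cat leq_addr.
have eq_u : take (size u) W = u by rewrite -(take_takel _ le_ur) eq_ut take_size_cat.
exists (size u); rewrite /is_origin le_ur /start_pos eq_u no_u /slice eq_ut.
by rewrite drop_size_cat //; apply/in_starP.
Qed.

Lemma is_origin_uniq r o1 o2 : r <= size W -> is_origin o1 r -> is_origin o2 r -> o1 = o2.
Proof.
move=> le_rW /and3P [le_o1 no_o1 /in_starP star_o1] /and3P [le_o2 no_o2 /in_starP star_o2].
have eq_W := etrans (esym (take_slice W le_o1)) (take_slice W le_o2).
have eq_t := star_max_suffix_uniq eq_W star_o1 star_o2 no_o1 no_o2.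
move: eq_W; rewrite eq_t => /catsI /(congr1 size).
by rewrite !size_takel // (leq_trans _ le_rW).
Qed.

Lemma is_origin_origin r : r <= size W -> is_origin (origin r) r.
Proof.
move=> le_rW; have [o is_o] := is_origin_exists le_rW.
have has_o : has (is_origin^~ r) (iota 0 r.+1).
  by apply/hasP; exists o => //; rewrite mem_iota ltnS; case/and3P: is_o.
have lt_find : origin r < r.+1 by rewrite -[r.+1](size_iota 0) -has_find.
by have := nth_find 0 has_o; rewrite nth_iota.
Qed.

Lemma origin_eq r o : r <= size W -> is_origin o r -> origin r = o.
Proof. by move=> le_rW; apply: is_origin_uniq le_rW (is_origin_origin le_rW). Qed.

Lemma origin_le r : r <= size W -> origin r <= r.
Proof. by case/is_origin_origin/and3P. Qed.

Lemma start_pos_origin r : r <= size W -> start_pos W (origin r).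
Proof. by case/is_origin_origin/and3P. Qed.

Lemma origin_start o : o <= size W -> start_pos W o -> origin o = o.
Proof.
move=> le_oW start_o; apply: origin_eq; rewrite // /is_origin leqnn start_o /slice.
by rewrite drop_oversize ?size_takel //; apply/in_starP/star_nil.
Qed.

Lemma origin_star r r' : r <= r' -> r' <= size W -> star (slice W r r') ->
  origin r' = origin r.
Proof.
move=> le_rr' le_r'W star_rr'; have le_rW := leq_trans le_rr' le_r'W.
case/and3P: (is_origin_origin le_rW) => le_o start_o /in_starP star_o.
apply: origin_eq; rewrite // /is_origin (leq_trans le_o le_rr') start_o /=.
by apply/in_starP; rewrite (slice_cat le_o le_rr') //; apply: star_cat.
Qed.

Lemma star_slice_origin r r' : r <= r' -> r' <= size W -> origin r = origin r' ->
  star (slice W r r').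
Proof.
move=> le_rr' le_r'W eq_o; have le_rW := leq_trans le_rr' le_r'W.
case/and3P: (is_origin_origin le_rW) => le_o _ /in_starP star_o.
case/and3P: (is_origin_origin le_r'W); rewrite -eq_o => le_o' _ /in_starP.
by rewrite (slice_cat le_o le_rr') //; apply: star_right_unitary.
Qed.

Lemma origin_code_step r x w : r <= size W -> drop r W = x ++ w -> X x ->
  origin (r + size x) = origin r.
Proof.
move=> le_rW eq_d Xx; have le_W := size_drop_cat le_rW eq_d.
by apply: origin_star; rewrite ?leq_addr ?(slice_drop_cat eq_d) //; apply: star_code.
Qed.

Lemma code_slice_origin r r' : r < r' -> r' <= size W -> origin r = origin r' ->
  (forall s, r < s < r' -> origin s != origin r) -> X (slice W r r').
Proof.
move=> lt_rr' le_r'W eq_o no_o; have le_rr' := ltnW lt_rr'.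
have [|x [w [eq_xw Xx _]]] := star_first (star_slice_origin le_rr' le_r'W eq_o).
  by apply/eqP; rewrite -size_eq0 size_slice // subn_eq0 -ltnNge.
have eq_d : drop r W = x ++ (w ++ drop r' W) by rewrite (drop_slice W le_rr') eq_xw catA.
have le_xr' : r + size x <= r'.
  by rewrite -leq_subRL // -(size_slice le_rr' le_r'W) // eq_xw size_cat leq_addr.
have lt_rx : r < r + size x by rewrite -{1}[r]addn0 ltn_add2l (code_size_gt0 Xx).
move: le_xr'; rewrite leq_eqVlt => /orP [/eqP <-|lt_xr']; first by rewrite (slice_drop_cat eq_d).
have := no_o (r + size x); rewrite lt_rx lt_xr'.
by rewrite (origin_code_step (leq_trans le_rr' le_r'W) eq_d Xx) eqxx => /(_ isT).
Qed.

Lemma end_pos_origin r : r <= size W ->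
  (forall s, r < s <= size W -> origin s != origin r) -> end_pos W r.
Proof.
move=> le_rW no_o; apply/has_prefix_inP => -[x [w [eq_d Xx]]].
have lt_rx : r < r + size x by rewrite -{1}[r]addn0 ltn_add2l (code_size_gt0 Xx).
have := no_o (r + size x); rewrite lt_rx (size_drop_cat le_rW eq_d).
by rewrite (origin_code_step le_rW eq_d Xx) eqxx => /(_ isT).
Qed.

End Origins.

(** * Bounding words with few origins *)

Section ColouredFactor.
Variables (P u Q : seq A) (Y : pred (seq A)) (k : nat) (g : nat -> nat).
Hypothesis Y_sub_X : forall w, Y w -> X w.
Hypothesis g_colouring : cut_colouring Y k u g.
Let W := P ++ u ++ Q.

Lemma origin_colour r r' : r <= r' -> r' <= size u -> g r = g r' -> g r < k ->
  origin W (size P + r) = origin W (size P + r').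
Proof.
elim/ltn_ind: r' => r' IH le_rr' le_r'u eq_g lt_gk.
move: le_rr'; rewrite leq_eqVlt => /orP [/eqP <- //|lt_rr'].
have ltn_pred t : (t < r') = (t <= r'.-1).
  by rewrite -[RHS]ltnS prednK // (leq_ltn_trans _ lt_rr').
have le_r_pred : r <= r'.-1 by rewrite -ltn_pred.
have [s [/andP [le_rs le_sr'] eq_gs last_s]] :=
  ex_greatest_leq (P := fun s => g s == g r) le_r_pred (eqxx _).
have {le_sr'} lt_sr' : s < r' by rewrite ltn_pred.
have Y_sr' : Y (slice u s r').
  apply: g_colouring.2 => //; rewrite ?(eqP eq_gs) // => t /andP [lt_st lt_tr'].
  by apply: last_s; rewrite lt_st -ltn_pred.
rewrite (IH s) ?(eqP eq_gs) ?(leq_trans (ltnW lt_sr')) //; symmetry.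
apply: origin_star; rewrite ?leq_add2l ?(ltnW lt_sr') //.
  by rewrite /W !size_cat leq_add2l (leq_trans le_r'u) ?leq_addr.
by rewrite /W slice_middle ?(ltnW lt_sr') //; apply/star_code/Y_sub_X.
Qed.

Lemma few_interior_origins : exists2 O : seq nat, size O <= k &
  forall r, 0 < r < size u -> origin W (size P + r) \in O.
Proof.
have [||O szO memO] := @colours_image _ [seq r <- iota 0 (size u) | 0 < r] g
    (fun r => origin W (size P + r)) k.
- move=> r; rewrite mem_filter mem_iota => /andP [r_gt0 lt_ru].
  by apply: g_colouring.1; rewrite r_gt0.
- move=> r r'; rewrite !mem_filter !mem_iota => /andP [r_gt0 lt_ru] /andP [r'_gt0 lt_r'u] eq_g.
  have lt_gk : g r < k by apply: g_colouring.1; rewrite r_gt0.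
  have [le_rr'|/ltnW le_r'r] := leqP r r'; first exact: origin_colour (ltnW lt_r'u) eq_g lt_gk.
  by apply/esym/origin_colour; rewrite -?eq_g // ltnW.
by exists O => // r /andP [r_gt0 lt_ru]; apply: memO; rewrite mem_filter mem_iota r_gt0.
Qed.

End ColouredFactor.

Lemma no_late_start z v i : delta X (z ++ v) <= delta X z ->
  size z < i -> i <= size (z ++ v) -> ~~ start_pos (z ++ v) i.
Proof.
rewrite delta_cat_start -{2}[delta X z]addn0 leq_add2l leqNgt -has_count => /hasPn no_start.
by move=> lt_zi le_i; apply: no_start; rewrite mem_iota lt_zi addSn ltnS -size_cat.
Qed.

Lemma no_early_end v z j : delta X (v ++ z) <= delta X z -> j < size v -> ~~ end_pos (v ++ z) j.
Proof.
rewrite delta_cat_end -{2}[delta X z]add0n leq_add2r leqNgt -has_count => /hasPn no_end.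
by move=> lt_jv; apply: no_end; rewrite mem_iota.
Qed.

Lemma origin_gap W n o a b : (forall x, X x -> size x <= n) ->
  o <= a -> a <= b -> b <= size W -> start_pos W o ->
  (forall j, j < b -> ~~ end_pos W j) -> (forall r, a < r < b -> origin W r != o) ->
  b - a <= n.
Proof.
move=> X_le le_oa le_ab le_bW start_o no_end no_o.
have le_oW := leq_trans le_oa (leq_trans le_ab le_bW).
pose at_o r := origin W r == o.
have orig_o : at_o o by rewrite /at_o origin_start.
have [r1 [/andP [le_o1 le_1a] orig_1 last_1]] := ex_greatest_leq le_oa orig_o.
have [rm [/andP [le_om le_mW] orig_m last_m]] := ex_greatest_leq le_oW orig_o.
have le_bm : b <= rm.
  have end_m : end_pos W rm.
    by apply: end_pos_origin => // s lt_ms; rewrite (eqP orig_m); apply: last_m.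
  by rewrite leqNgt; apply: contraL end_m => /no_end.
have [r2 [/andP [le_b2 le_2m] orig_2 first_2]] := ex_least_geq le_bm orig_m.
have le_2W := leq_trans le_2m le_mW.
have [lt_12|le_21] := ltnP r1 r2; last first.
  have -> : b = a by apply/eqP; rewrite eqn_leq le_ab (leq_trans le_b2 (leq_trans le_21 le_1a)).
  by rewrite subnn.
have X_12 : X (slice W r1 r2).
  apply: code_slice_origin; rewrite // ?(eqP orig_1) ?(eqP orig_2) // => s /andP [lt_1s lt_s2].
  have [le_sa|lt_as] := leqP s a; first by apply: last_1; rewrite lt_1s.
  have [lt_sb|le_bs] := ltnP s b; first by apply: no_o; rewrite lt_as.
  by apply: first_2; rewrite le_bs.
apply: leq_trans (X_le _ X_12); rewrite size_slice ?(ltnW lt_12) //.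
exact: leq_sub.
Qed.

Lemma colourable_size_le F d z n (Y : pred (seq A)) k u : recurrent F ->
  (forall w, F w -> delta X w <= d) -> F z -> delta X z = d ->
  (forall x, X x -> size x <= n) -> (forall w, Y w -> X w) ->
  k < d -> F u -> colourable Y k u -> size u <= n.
Proof.
move=> recF deg_le Fz deg_z X_le Y_sub_X lt_kd Fu [g g_colouring].
have [t [t' FW]] := recurrent_sandwich recF Fz Fu.
set W := z ++ t ++ u ++ t' ++ z in FW.
have eq_Wu : W = (z ++ t) ++ u ++ t' ++ z by rewrite /W catA.
have eq_Wz : W = (z ++ t ++ u ++ t') ++ z by rewrite /W -!catA.
have deg_W : delta X W <= delta X z by rewrite deg_z deg_le.
have [O size_O mem_O] := few_interior_origins (z ++ t) (t' ++ z) Y_sub_X g_colouring.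
rewrite -eq_Wu in mem_O.
set starts := filter (start_pos W) (iota 0 (size W).+1).
have /hasP [o] : has [predC O] starts.
  apply: uniq_has_notin; first exact/filter_uniq/iota_uniq.
  rewrite size_filter -delta_start (leq_ltn_trans size_O (leq_trans lt_kd _)) //.
  by rewrite /W delta_cat_start deg_z leq_addr.
rewrite inE mem_filter mem_iota ltnS => /andP [start_o /andP [_ le_oW]] notin_O.
(* The parse of [W] starting at [o] has no cut point inside [u]. *)
have le_oz : o <= size z by rewrite leqNgt; apply: contraL start_o => /(no_late_start deg_W); apply.
rewrite -(addKn (size (z ++ t)) (size u)); apply: (origin_gap X_le _ _ _ start_o).
- by rewrite size_cat (leq_trans le_oz) ?leq_addr.
- exact: leq_addr.
- by rewrite [W]eq_Wu [in X in _ <= X]size_cat leq_add2l size_cat leq_addr.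
- move=> j lt_j; rewrite eq_Wz; apply: no_early_end; rewrite -?eq_Wz //; apply: leq_trans lt_j _.
  by rewrite !size_cat !addnA leq_addr.
move=> r /andP [lt_ar lt_rb]; apply: contraNneq notin_O => <-.
rewrite -(subnKC (ltnW lt_ar)); apply: mem_O.
by rewrite subn_gt0 lt_ar ltn_subLR // ltnW.
Qed.

Definition origin_bound (F : pred (seq A)) k M := forall W p q (O : seq nat), F W ->
  p <= q -> q <= size W -> size O <= k -> (forall r, p < r < q -> origin W r \in O) ->
  q - p <= M.

Lemma origin_bound0 F : origin_bound F 0 1.
Proof.
move=> W p q O _ le_pq _; rewrite leqn0 size_eq0 => /eqP -> mem_O.
rewrite leqNgt ltn_subRL addn1; apply/negP => lt_pq.
by have := mem_O p.+1; rewrite ltnSn lt_pq => /(_ isT).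
Qed.

Lemma origin_boundS F d k M B : recurrent F -> k.+1 < d -> origin_bound F k M ->
  colouring_bound F d (filter X (words_upto A M)) B -> origin_bound F k.+1 B.
Proof.
move=> [_ F_factor _] lt_kd bound_M bound_B W p q O FW le_pq le_qW size_O mem_O.
set O' := undup O; set u := slice W p q.
have size_u : size u = q - p by rewrite size_slice.
have size_O' : size O' < d by apply: leq_ltn_trans lt_kd; rewrite (leq_trans (size_undup O)).
have Fu : F u.
  by apply: (F_factor (take p W) _ (drop q W)); rewrite catA -take_slice // cat_take_drop.
rewrite -size_u; apply: (bound_B (size O')) => //.
exists (fun r => index (origin W (p + r)) O'); split=> [r /andP [r_gt0 lt_ru]|r r' lt_rr' le_r'u].
  by rewrite index_mem mem_undup mem_O // -{1}[p]addn0 ltn_add2l r_gt0 -ltn_subRL -size_u.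
move=> eq_idx lt_idx no_idx.
have le_r'q : p + r' <= q by rewrite -leq_subRL // -size_u.
have mem_r : origin W (p + r) \in O' by rewrite -index_mem.
have mem_r' : origin W (p + r') \in O' by rewrite -index_mem -eq_idx.
have eq_o : origin W (p + r) = origin W (p + r').
  by rewrite -(nth_index 0 mem_r) -(nth_index 0 mem_r') eq_idx.
have no_o s : p + r < s < p + r' -> origin W s != origin W (p + r).
  move=> /andP [lt_rs lt_sr']; have le_ps := leq_trans (leq_addr r p) (ltnW lt_rs).
  have := no_idx (s - p); rewrite ltn_subRL ltn_subLR // lt_rs lt_sr' subnKC // => /(_ isT).
  by apply: contraNneq => ->.
have X_rr' : X (slice W (p + r) (p + r')).
  by apply: code_slice_origin; rewrite ?ltn_add2l // (leq_trans le_r'q).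
rewrite slice_slice ?(ltnW lt_rr') -?size_u // inE mem_filter X_rr' mem_words_upto //.
rewrite size_slice ?leq_add2l ?(ltnW lt_rr') ?(leq_trans le_r'q) //.
apply: (bound_M W (p + r) (p + r') (rem (origin W (p + r)) O')) => //.
- by rewrite leq_add2l ltnW.
- exact: leq_trans le_r'q le_qW.
- by rewrite size_rem // -subn1 leq_subLR add1n (leq_trans (size_undup O)).
move=> s /andP [lt_rs lt_sr']; rewrite mem_rem_uniq ?undup_uniq // inE no_o ?lt_rs //=.
by rewrite mem_undup mem_O // (leq_ltn_trans (leq_addr r p) lt_rs) (leq_trans lt_sr').
Qed.

Lemma origin_code_interior x r : X x -> 0 < r < size x -> origin x r != 0.
Proof.
move=> Xx /andP [r_gt0 lt_rx]; have le_rx := ltnW lt_rx; apply/eqP => orig_0.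
have := is_origin_origin le_rx; rewrite orig_0 => /and3P [_ _ /in_starP].
rewrite slice0s => /star_first [|y [w [eq_rx Xy _]]].
  by apply/eqP; rewrite -size_eq0 size_takel // -lt0n.
have eq_yx : y = x.
  apply: code_prefix => //; apply/prefixP; exists (w ++ drop r x).
  by rewrite catA -eq_rx cat_take_drop.
have := size_takel le_rx; rewrite eq_rx size_cat eq_yx => eq_r.
by move: lt_rx; rewrite -eq_r ltnNge leq_addr.
Qed.

Lemma code_size_le (F : pred (seq A)) d M : 0 < d -> (forall x, X x -> F x) ->
  (forall w, F w -> delta X w <= d) -> origin_bound F d.-1 M -> forall x, X x -> size x <= M.
Proof.
move=> d_gt0 X_sub_F deg_le bound_M x Xx.
set starts := filter (start_pos x) (iota 0 (size x).+1).
have start_0 : 0 \in starts.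
  by rewrite mem_filter mem_iota /start_pos /has_suffix_in take0 /= (negbTE code_nil).
rewrite -[size x]subn0; apply: (bound_M x 0 (size x) (rem 0 starts)) => //.
- exact: X_sub_F.
- rewrite size_rem // size_filter -delta_start -!subn1 leq_sub2r //.
  exact/deg_le/X_sub_F.
move=> r /andP [r_gt0 lt_rx]; have le_rx := ltnW lt_rx.
rewrite mem_rem_uniq ?filter_uniq ?iota_uniq // inE origin_code_interior //=; last by rewrite r_gt0.
by rewrite mem_filter start_pos_origin // mem_iota ltnS (leq_trans (origin_le le_rx)).
Qed.

End Code.

Lemma ex_origin_bound (A : finType) (F : pred (seq A)) d k : recurrent F -> k < d ->
  exists M, forall X, bifix_code X -> has_F_degree F X d -> finite_words X ->
    origin_bound X F k M.
Proof.
move=> recF; elim: k => [|k IHk] lt_kd.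
  by exists 1 => X _ _ _; apply: origin_bound0.
have [M bound_M] := IHk (ltnW lt_kd).
have [B bound_B] := ex_uniform_bound (sublists (words_upto A M)) (@colouring_bound_le _ F d).
exists B => X code_X deg_X fin_X; have [code_nil code_prefix code_suffix] := code_X.
apply: (origin_boundS code_nil code_prefix code_suffix recF lt_kd (bound_M X code_X deg_X fin_X)).
apply: bound_B; first exact: mem_sublists_filter.
have [n X_le] := finite_words_bounded fin_X; have [[z Fz deg_z] deg_le] := deg_X.
exists n => k' u lt_k'd Fu.
apply: (colourable_size_le code_nil code_prefix code_suffix recF deg_le Fz deg_z X_le _ lt_k'd Fu).
by move=> w; rewrite inE mem_filter => /andP [].
Qed.

Theorem mainTheorem9 (A : finType) (F : pred (seq A)) (d : nat) :
  recurrent F -> 1 <= d ->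
  exists L : seq (seq (seq A)),
    forall X : pred (seq A),
      finite_words X -> F_maximal_bifix F X -> has_F_degree F X d ->
      exists2 s, s \in L & X =i s.
Proof.
move=> recF d_gt0.
have [M bound_M] : exists M, forall X, bifix_code X -> has_F_degree F X d ->
    finite_words X -> origin_bound X F d.-1 M.
  by apply: ex_origin_bound; rewrite ?ltn_predL.
exists (sublists (words_upto A M)) => X fin_X [code_X X_sub_F _] deg_X.
have [code_nil code_prefix _] := code_X.
have X_le := code_size_le code_nil code_prefix d_gt0 X_sub_F deg_X.2 (bound_M X code_X deg_X fin_X).
exists (filter X (words_upto A M)); first exact: mem_sublists_filter.
move=> w; rewrite mem_filter -[w \in X]/(X w).
by case: (boolP (X w)) => //= Xw; rewrite mem_words_upto ?X_le.
Qed.
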